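(* Consider the system \[ x_{k+1} = x_k - \rho y_k + \hat g(y_k,w_k),\qquad y_{k+1} = (1-\beta)y_k + \hat h(y_{k-1},w_{k-1})\bigl(J(x_k)-J(x_{k-1})\bigr) \] with the setup described in the context. Then for every $k\ge1$, \[ \mathbb{E}[\tilde x_{k+1}^2]=\mathbb{E}[\tilde x_k^2]+(\psi+\rho^2)\mathbb{E}[y_k^2]-2\rho\,\mathbb{E}[\tilde x_ky_k]+\varepsilon\psi\bigl(\varepsilon+2\mathbb{E}[|y_k|]\bigr), \] and \[ \begin{aligned} \mathbb{E}[y_{k+1}^2]&=(1-\beta)^2\mathbb{E}[y_k^2]+2(1-\beta)\mu\gamma\,\mathbb{E}[\tilde x_ky_k]+\mu^2(\rho^2\chi+\gamma^2)\mathbb{E}[\tilde x_{k-1}^2]\\ &\quad-\mu^2\rho(3\gamma^2+\rho^2\chi)\mathbb{E}[\tilde x_{k-1}y_{k-1}]+\frac{\mu^2(\rho^4\chi+\gamma^2\psi+6\gamma^2\rho^2)}{4}\mathbb{E}[y_{k-1}^2]+R_y(\varepsilon), \end{aligned} \] where \[ \begin{aligned} R_y(\varepsilon)&:=\mu^2\varepsilon\Bigl(\frac{\gamma^2\psi}{4}\bigl(\varepsilon+2\mathbb{E}[|y_{k-1}|]\bigr)-\frac{\rho^2\chi}{2}\mathbb{E}\bigl[T_1(y_{k-1},\varepsilon)(\tilde x_k^2+\tilde x_{k-1}^2)\bigr]\\ &\qquad+\frac{\rho^2(\rho^2\chi+2\gamma^2)}{4}\mathbb{E}\bigl[T_1(y_{k-1},\varepsilon)y_{k-1}^2\bigr]+\frac{\rho^2\gamma^2}{2}\mathbb{E}\bigl[T_2(y_{k-1},\varepsilon)\bigr]\Bigr),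 \end{aligned} \] with $T_1(y,\varepsilon):=\frac{\varepsilon+2|y|}{(|y|+\varepsilon)^2}$ and $T_2(y,\varepsilon):=\frac{\varepsilon(\varepsilon+2|y|)^2}{(|y|+\varepsilon)^2}$.
   Context: Setup. Parameters: $\rho>0$, $\beta\in(0,2)$, $\varepsilon>0$, $\omega>0$. The random variables $w_i$, $i\in\mathbb{N}\cup\{0\}$, are i.i.d., each taking the value $-\omega$ or $\omega$ with probability $1/2$. The functions $h,g:\mathbb{R}\to\mathbb{R}$ are odd, satisfy $\mathrm{sign}(g(w))=\mathrm{sign}(h(w))$ for all $w$, and $g(w)=h(w)=0$ if and only if $w=0$. Define $\hat h(y,w):=\frac{h(w)}{|y|+\varepsilon}$ and $\hat g(y,w):=(|y|+\varepsilon)g(w)$. The objective is $J(x)=J^*+\frac{\mu}{2}(x-x^* )^2$ with $\mu>0$, $x^*,J^*\in\mathbb{R}$. The initial data $x_0,y_0$ and the initialization $y_1$ (the $y$-update being applied for $k\ge1$) are deterministic. Notation: $\tilde x_k:=x_k-x^*$, $\chi:=\mathbb{E}[h(w_k)^2]$, $\psi:=\mathbb{E}[g(w_k)^2]$, $\gamma:=\mathbb{E}[h(w_k)g(w_k)]=\sqrt{\chi\psi}$. *)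

From Stdlib Require Import Reals.
Open Scope R_scope.

Definition sgn (x : R) : R :=
  if Rlt_dec 0 x then 1 else if Rlt_dec x 0 then -1 else 0.

Definition odd_fun (f : R -> R) : Prop := forall w, f (- w) = - f w.

Definition hhat (eps : R) (h : R -> R) (y w : R) : R := h w / (Rabs y + eps).
Definition ghat (eps : R) (g : R -> R) (y w : R) : R := (Rabs y + eps) * g w.

Definition Jobj (Js mu xs : R) (x : R) : R := Js + mu / 2 * (x - xs) ^ 2.

(* State of the recursion at step n: (x_n, y_n, x_{n+1}, y_{n+1}),
   driven by a realisation w : nat -> R of the noise sequence (w_i). *)
Fixpoint state (rho beta eps mu xs Js x0 y0 y1 : R) (h g : R -> R)
  (w : nat -> R) (n : nat) : R * R * R * R :=
  match n with
  | O => (x0, y0, x0 - rho * y0 + ghat eps g y0 (w O), y1)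
  | S m =>
      let '(xa, ya, xb, yb) := state rho beta eps mu xs Js x0 y0 y1 h g w m in
      (xb, yb,
       xb - rho * yb + ghat eps g yb (w (S m)),
       (1 - beta) * yb + hhat eps h ya (w m) * (Jobj Js mu xs xb - Jobj Js mu xs xa))
  end.

Definition xseq rho beta eps mu xs Js x0 y0 y1 h g w n : R :=
  let '(x, _, _, _) := state rho beta eps mu xs Js x0 y0 y1 h g w n in x.
Definition yseq rho beta eps mu xs Js x0 y0 y1 h g w n : R :=
  let '(_, y, _, _) := state rho beta eps mu xs Js x0 y0 y1 h g w n in y.

Definition scons (a : R) (w : nat -> R) : nat -> R :=
  fun i => match i with O => a | S j => w j end.

(* Expectation of F(w_0, w_1, ...) with w_0,...,w_{N-1} i.i.d. uniform on
   {-omega, omega} (coordinates >= N frozen at omega; used only for F that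
   depend on the first N coordinates only). *)
Fixpoint Ew (omega : R) (N : nat) (F : (nat -> R) -> R) : R :=
  match N with
  | O => F (fun _ => omega)
  | S n => (Ew omega n (fun w => F (scons omega w))
            + Ew omega n (fun w => F (scons (- omega) w))) / 2
  end.

Definition Ew1 (omega : R) (f : R -> R) : R := (f omega + f (- omega)) / 2.

Definition T1 (y eps : R) : R := (eps + 2 * Rabs y) / (Rabs y + eps) ^ 2.
Definition T2 (y eps : R) : R := eps * (eps + 2 * Rabs y) ^ 2 / (Rabs y + eps) ^ 2.

(* Each identity is obtained by averaging over a single noise variable.
   Since x_n depends only on w_0, ..., w_(n-1) and y_n only on
   w_0, ..., w_(n-2), the expectation of x~_(k+1)^2 may be computed by first
   averaging over w_k, with x_k and y_k frozen, and that of y_(k+1)^2 by first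
   averaging over w_(k-1), with x_(k-1), y_(k-1) and y_k frozen.  As g and h
   are odd, w = +-omega only flips the signs of g(w) and h(w), so each of these
   averages is an explicit rational expression in g(omega), h(omega) and the
   frozen values, and chi = h(omega)^2, psi = g(omega)^2, gamma =
   h(omega) g(omega).  The eps-dependent terms come from splitting
   (|y| + eps)^2 = y^2 + eps (eps + 2 |y|). *)

From Stdlib Require Import Reals Lra Lia FunctionalExtensionality.
Open Scope R_scope.

Lemma Ew_ext om N F G : (forall w, F w = G w) -> Ew om N F = Ew om N G.
Proof.
  revert F G; induction N as [|N IH]; intros F G FG; simpl; [apply FG|].
  rewrite (IH (fun w => F (scons om w)) (fun w => G (scons om w))),
          (IH (fun w => F (scons (- om) w)) (fun w => G (scons (- om) w))) by auto.
  reflexivity.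
Qed.

Lemma Ew_plus om N F G : Ew om N (fun w => F w + G w) = Ew om N F + Ew om N G.
Proof.
  revert F G; induction N as [|N IH]; intros F G; simpl; [reflexivity|].
  rewrite (IH (fun w => F (scons om w))), (IH (fun w => F (scons (- om) w))).
  lra.
Qed.

Lemma Ew_scal om N c F : Ew om N (fun w => c * F w) = c * Ew om N F.
Proof.
  revert F; induction N as [|N IH]; intros F; simpl; [reflexivity|].
  rewrite (IH (fun w => F (scons om w))), (IH (fun w => F (scons (- om) w))).
  lra.
Qed.

Lemma Ew_const om N c : Ew om N (fun _ => c) = c.
Proof. induction N as [|N IH]; simpl; [reflexivity|]. rewrite IH. lra. Qed.

Lemma Ew_minus om N F G : Ew om N (fun w => F w - G w) = Ew om N F - Ew om N G.
Proof.
  rewrite (Ew_ext om N _ (fun w => F w + -1 * G w)) by (intro; ring).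
  rewrite Ew_plus, Ew_scal. ring.
Qed.

Lemma Ew_const_plus om N c F : c + Ew om N F = Ew om N (fun w => c + F w).
Proof. rewrite Ew_plus, Ew_const. reflexivity. Qed.

Ltac Ew_combine := repeat rewrite <- ?Ew_plus, <- ?Ew_minus, <- ?Ew_scal.

Definition upd (w : nat -> R) (j : nat) (v : R) : nat -> R :=
  fun i => if Nat.eqb i j then v else w i.

Lemma upd_at w j v : upd w j v j = v.
Proof. unfold upd. rewrite Nat.eqb_refl. reflexivity. Qed.

Lemma upd_scons0 a w v : upd (scons a w) 0 v = scons v w.
Proof. apply functional_extensionality; intros [|i]; reflexivity. Qed.

Lemma upd_sconsS a w j v : upd (scons a w) (S j) v = scons a (upd w j v).
Proof. apply functional_extensionality; intros [|i]; reflexivity. Qed.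

Lemma upd_agree_below w j v n : (n <= j)%nat ->
  forall i, (i < n)%nat -> upd w j v i = w i.
Proof. intros Hn i Hi. unfold upd. destruct (Nat.eqb_spec i j); [lia|reflexivity]. Qed.

Lemma Ew_average_coord om N F j : (j < N)%nat ->
  Ew om N F = Ew om N (fun w => Ew1 om (fun v => F (upd w j v))).
Proof.
  revert F j; induction N as [|N IH]; intros F j Hj; [lia|].
  simpl; unfold Ew1; destruct j as [|j].
  - assert (avg : forall a, Ew om N (fun w => (F (upd (scons a w) 0 om)
                                              + F (upd (scons a w) 0 (- om))) / 2)
                   = (Ew om N (fun w => F (scons om w))
                      + Ew om N (fun w => F (scons (- om) w))) / 2).
    { intro a.
      rewrite (Ew_ext om N _ (fun w => / 2 * F (scons om w) + / 2 * F (scons (- om) w)))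
        by (intro; rewrite !upd_scons0; lra).
      rewrite Ew_plus, !Ew_scal. lra. }
    rewrite !avg. lra.
  - rewrite (IH (fun w => F (scons om w)) j), (IH (fun w => F (scons (- om) w)) j)
      by lia.
    do 2 f_equal; apply Ew_ext; intro w; rewrite !upd_sconsS; reflexivity.
Qed.

Lemma Ew_eq_average_coord om N F G j : (j < N)%nat ->
  (forall w, Ew1 om (fun v => F (upd w j v)) = Ew1 om (fun v => G (upd w j v))) ->
  Ew om N F = Ew om N G.
Proof.
  intros Hj FG. rewrite (Ew_average_coord om N F j Hj), (Ew_average_coord om N G j Hj).
  apply Ew_ext; exact FG.
Qed.

Lemma Jobj_sub Js mu xs a b :
  Jobj Js mu xs a - Jobj Js mu xs b = mu / 2 * ((a - xs) ^ 2 - (b - xs) ^ 2).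
Proof. unfold Jobj. ring. Qed.

Section Recursion.

Variables (rho beta eps mu xs Js x0 y0 y1 : R) (h g : R -> R).

Local Notation x := (xseq rho beta eps mu xs Js x0 y0 y1 h g).
Local Notation y := (yseq rho beta eps mu xs Js x0 y0 y1 h g).

Lemma xseq_S w n : x w (S n) = x w n - rho * y w n + ghat eps g (y w n) (w n).
Proof.
  unfold xseq, yseq; destruct n; simpl; [reflexivity|].
  destruct (state rho beta eps mu xs Js x0 y0 y1 h g w n) as [[[? ?] ?] ?].
  reflexivity.
Qed.

Lemma yseq_SS w n :
  y w (S (S n)) = (1 - beta) * y w (S n)
    + hhat eps h (y w n) (w n) * (Jobj Js mu xs (x w (S n)) - Jobj Js mu xs (x w n)).
Proof.
  unfold xseq, yseq; simpl.
  destruct (state rho beta eps mu xs Js x0 y0 y1 h g w n) as [[[? ?] ?] ?].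
  reflexivity.
Qed.

Lemma seq_depend_past n w w' : (forall i, (i < n)%nat -> w i = w' i) ->
  x w n = x w' n /\ y w n = y w' n /\ y w (S n) = y w' (S n).
Proof.
  revert w w'; induction n as [|n IH]; intros w w' ww'; [unfold xseq, yseq; auto|].
  destruct (IH w w') as (Ex & Ey & EyS); [intros; apply ww'; lia|].
  assert (Ew : w n = w' n) by (apply ww'; lia).
  split; [|split]; [rewrite !xseq_S, Ex, Ey, Ew | exact EyS
                   | rewrite !yseq_SS, !xseq_S, Ex, Ey, EyS, Ew]; reflexivity.
Qed.

Lemma xseq_upd w j v n : (n <= j)%nat -> x (upd w j v) n = x w n.
Proof. intro Hn. apply (seq_depend_past n), upd_agree_below, Hn. Qed.

Lemma yseq_upd w j v n : (n <= S j)%nat -> y (upd w j v) n = y w n.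
Proof.
  intro Hn; destruct n as [|n].
  - apply (seq_depend_past 0); intros; lia.
  - apply (seq_depend_past n), upd_agree_below; lia.
Qed.

Lemma Ew_sq_xtilde_succ om N k : (k < N)%nat -> odd_fun g ->
  let psi := Ew1 om (fun v => g v ^ 2) in
  Ew om N (fun w => (x w (S k) - xs) ^ 2)
    = Ew om N (fun w => (x w k - xs) ^ 2) + (psi + rho ^ 2) * Ew om N (fun w => y w k ^ 2)
      - 2 * rho * Ew om N (fun w => (x w k - xs) * y w k)
      + eps * psi * (eps + 2 * Ew om N (fun w => Rabs (y w k))).
Proof.
  intros Hk godd psi; subst psi.
  Ew_combine; rewrite (Ew_const_plus om N eps); Ew_combine.
  apply (Ew_eq_average_coord om N _ _ k Hk); intro w; unfold Ew1.
  rewrite !xseq_S, !upd_at, !xseq_upd, !yseq_upd by lia.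
  unfold ghat; rewrite godd.
  set (G := g om); set (b := y w k); set (a := x w k); clearbody G a b.
  unfold Rabs; destruct (Rcase_abs b); field.
Qed.

Lemma Ew_sq_y_succ om N j : (j < N)%nat -> 0 < eps -> odd_fun h -> odd_fun g ->
  let chi := Ew1 om (fun v => h v ^ 2) in
  let psi := Ew1 om (fun v => g v ^ 2) in
  let gam := Ew1 om (fun v => h v * g v) in
  let E := Ew om N in
  E (fun w => y w (S (S j)) ^ 2)
    = (1 - beta) ^ 2 * E (fun w => y w (S j) ^ 2)
      + 2 * (1 - beta) * mu * gam * E (fun w => (x w (S j) - xs) * y w (S j))
      + mu ^ 2 * (rho ^ 2 * chi + gam ^ 2) * E (fun w => (x w j - xs) ^ 2)
      - mu ^ 2 * rho * (3 * gam ^ 2 + rho ^ 2 * chi) * E (fun w => (x w j - xs) * y w j)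
      + mu ^ 2 * (rho ^ 4 * chi + gam ^ 2 * psi + 6 * gam ^ 2 * rho ^ 2) / 4
          * E (fun w => y w j ^ 2)
      + mu ^ 2 * eps *
          (gam ^ 2 * psi / 4 * (eps + 2 * E (fun w => Rabs (y w j)))
           - rho ^ 2 * chi / 2 *
               E (fun w => T1 (y w j) eps * ((x w (S j) - xs) ^ 2 + (x w j - xs) ^ 2))
           + rho ^ 2 * (rho ^ 2 * chi + 2 * gam ^ 2) / 4 * E (fun w => T1 (y w j) eps * y w j ^ 2)
           + rho ^ 2 * gam ^ 2 / 2 * E (fun w => T2 (y w j) eps)).
Proof.
  intros Hj Heps hodd godd chi psi gam E; subst chi psi gam E.
  Ew_combine; rewrite (Ew_const_plus om N eps); Ew_combine.
  apply (Ew_eq_average_coord om N _ _ j Hj); intro w; unfold Ew1.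
  rewrite !yseq_SS, !xseq_S, !upd_at, !xseq_upd, !yseq_upd by lia.
  unfold ghat, hhat, T1, T2; rewrite !Jobj_sub, godd, hodd.
  set (G := g om); set (H := h om); set (b := y w j); set (Y := y w (S j));
    set (a := x w j); clearbody G H a b Y.
  unfold Rabs; destruct (Rcase_abs b); field; lra.
Qed.

End Recursion.

Theorem lemma7 (rho beta eps omega mu xs Js x0 y0 y1 : R) (h g : R -> R)
  (k N : nat) :
  0 < rho -> 0 < beta < 2 -> 0 < eps -> 0 < omega -> 0 < mu ->
  odd_fun h -> odd_fun g ->
  (forall w, sgn (g w) = sgn (h w)) ->
  (forall w, g w = 0 <-> w = 0) ->
  (forall w, h w = 0 <-> w = 0) ->
  (1 <= k)%nat -> (k + 1 <= N)%nat ->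
  let X := xseq rho beta eps mu xs Js x0 y0 y1 h g in
  let Y := yseq rho beta eps mu xs Js x0 y0 y1 h g in
  let xt := fun w n => X w n - xs in
  let E := Ew omega N in
  let chi := Ew1 omega (fun v => h v ^ 2) in
  let psi := Ew1 omega (fun v => g v ^ 2) in
  let gam := Ew1 omega (fun v => h v * g v) in
  let Ry :=
    mu ^ 2 * eps *
      (gam ^ 2 * psi / 4 * (eps + 2 * E (fun w => Rabs (Y w (k - 1)%nat)))
       - rho ^ 2 * chi / 2 *
           E (fun w => T1 (Y w (k - 1)%nat) eps
                         * (xt w k ^ 2 + xt w (k - 1)%nat ^ 2))
       + rho ^ 2 * (rho ^ 2 * chi + 2 * gam ^ 2) / 4 *
           E (fun w => T1 (Y w (k - 1)%nat) eps * Y w (k - 1)%nat ^ 2)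
       + rho ^ 2 * gam ^ 2 / 2 * E (fun w => T2 (Y w (k - 1)%nat) eps)) in
  E (fun w => xt w (S k) ^ 2)
    = E (fun w => xt w k ^ 2) + (psi + rho ^ 2) * E (fun w => Y w k ^ 2)
      - 2 * rho * E (fun w => xt w k * Y w k)
      + eps * psi * (eps + 2 * E (fun w => Rabs (Y w k)))
  /\
  E (fun w => Y w (S k) ^ 2)
    = (1 - beta) ^ 2 * E (fun w => Y w k ^ 2)
      + 2 * (1 - beta) * mu * gam * E (fun w => xt w k * Y w k)
      + mu ^ 2 * (rho ^ 2 * chi + gam ^ 2) * E (fun w => xt w (k - 1)%nat ^ 2)
      - mu ^ 2 * rho * (3 * gam ^ 2 + rho ^ 2 * chi)
          * E (fun w => xt w (k - 1)%nat * Y w (k - 1)%nat)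
      + mu ^ 2 * (rho ^ 4 * chi + gam ^ 2 * psi + 6 * gam ^ 2 * rho ^ 2) / 4
          * E (fun w => Y w (k - 1)%nat ^ 2)
      + Ry.
Proof.
  intros _ _ Heps _ _ hodd godd _ _ _ Hk HN.
  destruct k as [|j]; [lia|].
  replace (S j - 1)%nat with j by lia.
  split.
  - exact (Ew_sq_xtilde_succ rho beta eps mu xs Js x0 y0 y1 h g omega N (S j)
             ltac:(lia) godd).
  - exact (Ew_sq_y_succ rho beta eps mu xs Js x0 y0 y1 h g omega N j
             ltac:(lia) Heps hodd godd).
Qed.
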